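(* Let $(f,p)$ be a mechanism with $f_1(v,k)=k f_2(v,k)$ for all $(v,k)\in V\times K$. Then $(f,p)$ is incentive compatible if and only if for every $(v,k)\in V\times K$: (1) $f_2(v,k)\le f_2(v',k)$ for all $v'>v$ in $V$; (2) $p(v,k)=p(0,1)+v f_2(v,k)-\int_0^v f_2(t,k)\,dt$; (3) $\int_0^v f_2(t,k')\,dt\le\int_0^v f_2(t,k)\,dt$ for all $k'>k$ in $K$; (4) $\int_0^{vk/k'} f_2(t,k)\,dt\le\int_0^v f_2(t,k')\,dt$ for all $k'>k$ in $K$.
   Context: An agent has private type $(v,k)\in V\times K$, $V=[0,1]$, $K=(0,1]$, and from an outcome $(a_1,a_2,t)$ with $a_1,a_2\in[0,1]$ (quantities of two divisible goods) and $t\in\mathbb{R}$ (payment by the agent) gets utility $U_{(v,k)}(a_1,a_2,t)=v\min\{a_1/k,a_2\}-t$. A mechanism is a pair $(f,p)$ with $f=(f_1,f_2):V\times K\to[0,1]^2$, $p:V\times K\to\mathbb{R}$. It is incentive compatible if $U_{(v,k)}(f(v,k),p(v,k))\ge U_{(v,k)}(f(v',k'),p(v',k'))$ for all types $(v,k),(v',k')$. *)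

From Stdlib Require Import Reals.
From Coquelicot Require Import Coquelicot.
Open Scope R_scope.

Definition inV (v : R) : Prop := 0 <= v <= 1.
Definition inK (k : R) : Prop := 0 < k <= 1.

Definition U (v k a1 a2 t : R) : R := v * Rmin (a1 / k) a2 - t.

(* A mechanism (f1,f2,p) is given as functions R -> R -> R; only their values
   on V x K matter.  It is a mechanism when f maps V x K into [0,1]^2. *)
Definition is_mechanism (f1 f2 : R -> R -> R) : Prop :=
  forall v k, inV v -> inK k ->
    0 <= f1 v k <= 1 /\ 0 <= f2 v k <= 1.

Definition incentive_compatible (f1 f2 p : R -> R -> R) : Prop :=
  forall v k v' k', inV v -> inK k -> inV v' -> inK k' ->
    U v k (f1 v' k') (f2 v' k') (p v' k') <= U v k (f1 v k) (f2 v k) (p v k).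

(* With f1 = k f2, a type (v,k) reporting (v',k') gets v f2(v',k') - p(v',k') when
   k <= k' and (v k'/k) f2(v',k') - p(v',k') when k' < k: misreporting k only
   rescales the value.  Incentive compatibility in v alone says exactly that f2(.,k)
   is a subgradient of the truthful utility u_k(v) = v f2(v,k) - p(v,k) on [0,1];
   this gives the monotonicity (1) and the envelope formula
   u_k(v) = u_k(0) + int_0^v f2(t,k) dt, which is (2) since p(0,k) = p(0,1).
   Given (1) and (2), the subgradient inequality reduces a deviation in k to
   comparing u_k(v) with u_k'(v) (condition (3)) or with u_k'(v k'/k) (condition (4)).
   That a nondecreasing g has a primitive with subgradient g, so that it is Riemann
   integrable, is shown with the supremum of its left sums. *)

From Stdlib Require Import Reals Lra Lia List.
From Coquelicot Require Import Coquelicot.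
Open Scope R_scope.

Definition subgradient_on (u g : R -> R) (a b : R) : Prop :=
  forall x y, a <= x <= b -> a <= y <= b -> u y + (x - y) * g y <= u x.

Definition nondecreasing_on (g : R -> R) (a b : R) : Prop :=
  forall x y, a <= x -> x <= y -> y <= b -> g x <= g y.

Section Subgradient.

Variables (u g : R -> R) (a b : R).
Hypothesis Hug : subgradient_on u g a b.

Lemma subgradient_on_bounds x y : a <= x -> x <= y -> y <= b ->
  (y - x) * g x <= u y - u x <= (y - x) * g y.
Proof.
  intros Hx Hxy Hy.
  assert (Hyx := Hug y x ltac:(lra) ltac:(lra)).
  assert (Hxy' := Hug x y ltac:(lra) ltac:(lra)).
  split; lra.
Qed.

Lemma subgradient_on_nondecreasing : nondecreasing_on g a b.
Proof.
  intros x y Hx Hxy Hy.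
  destruct (Rle_lt_or_eq_dec x y Hxy) as [Hlt | <-]; [|lra].
  destruct (subgradient_on_bounds x y Hx Hxy Hy). nra.
Qed.

Lemma subgradient_on_cell x t y : a <= x -> x <= t -> t <= y -> y <= b ->
  Rabs ((y - x) * g t - (u y - u x)) <= (y - x) * (g y - g x).
Proof.
  intros Hx Hxt Hty Hy.
  destruct (subgradient_on_bounds x y Hx ltac:(lra) Hy).
  assert (Hgxt := subgradient_on_nondecreasing x t Hx Hxt ltac:(lra)).
  assert (Hgty := subgradient_on_nondecreasing t y ltac:(lra) Hty Hy).
  apply Rabs_le_between'. split; nra.
Qed.

Definition SF_end (s : @SF_seq R) : R := seq.last (SF_h s) (SF_lx s).

Lemma SF_end_cons (h : R * R) s : SF_end (SF_cons h s) = SF_end s.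
Proof. destruct s; reflexivity. Qed.

(* Each cell's error is at most its width times the increase of g across it,
   and these increases telescope. *)
Lemma Riemann_sum_subgradient (s : @SF_seq R) :
  pointed_subdiv s -> a <= SF_h s -> SF_end s <= b ->
  SF_h s <= SF_end s /\
  Rabs (Riemann_sum g s - (u (SF_end s) - u (SF_h s)))
    <= seq_step (SF_lx s) * (g (SF_end s) - g (SF_h s)).
Proof.
  induction s as [x0 | [x0 t] s IH] using (@SF_cons_ind R); intros Hs Ha Hb.
  - unfold SF_end. simpl.
    change (Riemann_sum g (SF_nil x0)) with 0.
    rewrite !Rminus_diag, Rabs_R0, Rmult_0_r. lra.
  - rewrite SF_end_cons in *. simpl in Ha.
    assert (Hcell := Hs 0%nat).
    destruct s as [x1 ts]. simpl in Hcell, IH |- *.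
    assert (Hx : x0 <= t <= x1) by (apply Hcell; unfold SF_size; simpl; lia).
    destruct (IH (ptd_cons _ _ Hs) ltac:(lra) Hb) as [Hle Hrest].
    set (s := {| SF_h := x1; SF_t := ts |}) in *.
    rewrite Riemann_sum_cons. simpl.
    change (plus (scal (x1 - x0) (g t)) (Riemann_sum g s))
      with ((x1 - x0) * g t + Riemann_sum g s).
    change (seq_step (SF_lx (SF_cons (x0, t) s)))
      with (Rmax (Rabs (x1 - x0)) (seq_step (SF_lx s))).
    assert (Hfirst := subgradient_on_cell x0 t x1 Ha ltac:(lra) ltac:(lra) ltac:(lra)).
    assert (Hg01 := subgradient_on_nondecreasing x0 x1 Ha ltac:(lra) ltac:(lra)).
    assert (Hg1e := subgradient_on_nondecreasing x1 (SF_end s) ltac:(lra) Hle Hb).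
    assert (Hstep0 := seq_step_ge_0 (SF_lx s)).
    assert (Hstep1 := Rmax_l (Rabs (x1 - x0)) (seq_step (SF_lx s))).
    assert (Hstep2 := Rmax_r (Rabs (x1 - x0)) (seq_step (SF_lx s))).
    set (M := Rmax (Rabs (x1 - x0)) (seq_step (SF_lx s))) in *.
    rewrite Rabs_right in Hstep1 by lra.
    split; [lra|].
    assert (Htriang := Rabs_triang ((x1 - x0) * g t - (u x1 - u x0))
                                   (Riemann_sum g s - (u (SF_end s) - u x1))).
    replace ((x1 - x0) * g t - (u x1 - u x0) + (Riemann_sum g s - (u (SF_end s) - u x1)))
      with ((x1 - x0) * g t + Riemann_sum g s - (u (SF_end s) - u x0)) in Htriang by ring.
    assert (0 <= (M - (x1 - x0)) * (g x1 - g x0)) by (apply Rmult_le_pos; lra).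
    assert (0 <= (M - seq_step (SF_lx s)) * (g (SF_end s) - g x1))
      by (apply Rmult_le_pos; lra).
    lra.
Qed.

Lemma is_RInt_subgradient : a <= b -> is_RInt g a b (u b - u a).
Proof.
  intros Hab.
  destruct (Rle_lt_or_eq_dec a b Hab) as [Hlt | <-].
  2:{ rewrite Rminus_diag. exact (is_RInt_point g a). }
  assert (Hgab := subgradient_on_nondecreasing a b ltac:(lra) Hab ltac:(lra)).
  apply filterlim_locally. intros eps.
  assert (Hdelta : 0 < eps / (g b - g a + 1)).
  { apply Rdiv_lt_0_compat; [apply cond_pos | lra]. }
  exists (mkposreal _ Hdelta). intros s Hstep [Hs [Hh Hl]]. simpl in Hstep.
  rewrite Rmin_left in Hh by lra. rewrite Rmax_right in Hl by lra.
  fold (SF_end s) in Hl.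
  destruct (Riemann_sum_subgradient s Hs ltac:(lra) ltac:(lra)) as [_ Hsum].
  rewrite Hl, Hh in Hsum.
  rewrite (sign_eq_1 (b - a)) by lra.
  change (Rabs (1 * Riemann_sum g s - (u b - u a)) < eps). rewrite Rmult_1_l.
  assert (Hstep0 := seq_step_ge_0 (SF_lx s)).
  assert (eps / (g b - g a + 1) * (g b - g a + 1) = eps) by (field; lra).
  assert (Heps := cond_pos eps).
  nra.
Qed.

End Subgradient.

Lemma RInt_subgradient u g a b x y : subgradient_on u g a b ->
  a <= x -> x <= y -> y <= b -> RInt g x y = u y - u x.
Proof.
  intros Hug Hx Hxy Hy. apply is_RInt_unique, is_RInt_subgradient; [|exact Hxy].
  intros s t Hs Ht. apply Hug; lra.
Qed.

Fixpoint left_sum (g : R -> R) (x0 : R) (l : list R) (x : R) : R :=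
  match l with
  | nil => (x - x0) * g x0
  | y :: l' => (y - x0) * g x0 + left_sum g y l' x
  end.

Fixpoint chain (x0 : R) (l : list R) (x : R) : Prop :=
  match l with
  | nil => x0 <= x
  | y :: l' => x0 <= y /\ chain y l' x
  end.

Lemma chain_le l : forall x0 x, chain x0 l x -> x0 <= x.
Proof.
  induction l as [|y l IH]; simpl; intros x0 x Hc; [lra|].
  destruct Hc as [Hy Hc]. specialize (IH _ _ Hc). lra.
Qed.

Lemma left_sum_snoc g l : forall x0 x y, chain x0 l x -> x <= y ->
  chain x0 (l ++ x :: nil) y /\
  left_sum g x0 (l ++ x :: nil) y = left_sum g x0 l x + (y - x) * g x.
Proof.
  induction l as [|z l IH]; simpl; intros x0 x y Hc Hxy.
  - split; [lra | ring].
  - destruct Hc as [Hz Hc]. destruct (IH z x y Hc Hxy) as [Hc' Hsum].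
    split; [tauto|]. rewrite Hsum. ring.
Qed.

Definition left_sums (g : R -> R) (a x : R) (s : R) : Prop :=
  exists l, chain a l x /\ s = left_sum g a l x.

Definition lower_primitive (g : R -> R) (a x : R) : R := real (Lub_Rbar (left_sums g a x)).

Section Nondecreasing.

Variables (g : R -> R) (a b : R).
Hypothesis Hg : nondecreasing_on g a b.

Lemma left_sum_le l : forall x0 x, a <= x0 -> x <= b -> chain x0 l x ->
  left_sum g x0 l x <= (x - x0) * g x.
Proof.
  induction l as [|y l IH]; simpl; intros x0 x Ha Hb Hc.
  - assert (g x0 <= g x) by (apply Hg; lra). nra.
  - destruct Hc as [Hy Hc]. assert (Hyx := chain_le _ _ _ Hc).
    specialize (IH y x ltac:(lra) Hb Hc).
    assert (g x0 <= g x) by (apply Hg; lra). nra.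
Qed.

Lemma left_sum_split l : forall x0 x y, a <= x0 -> y <= b -> chain x0 l y ->
  x0 <= x -> x <= y ->
  exists l1, chain x0 l1 x /\ left_sum g x0 l y <= left_sum g x0 l1 x + (y - x) * g y.
Proof.
  induction l as [|z l IH]; simpl; intros x0 x y Ha Hb Hc Hx Hxy.
  - exists nil. simpl. split; [lra|].
    assert (g x0 <= g y) by (apply Hg; lra). nra.
  - destruct Hc as [Hz Hc]. assert (Hzy := chain_le _ _ _ Hc).
    destruct (Rle_or_lt z x) as [Hzx | Hxz].
    + destruct (IH z x y ltac:(lra) Hb Hc Hzx Hxy) as [l1 [Hc1 Hsum]].
      exists (z :: l1). simpl. split; [tauto | lra].
    + exists nil. simpl. split; [lra|].
      assert (Hle := left_sum_le l z y ltac:(lra) Hb Hc).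
      assert (g x0 <= g y) by (apply Hg; lra). nra.
Qed.

Lemma lower_primitive_lub x : a <= x <= b ->
  (forall s, left_sums g a x s -> s <= lower_primitive g a x) /\
  (forall M, (forall s, left_sums g a x s -> s <= M) -> lower_primitive g a x <= M).
Proof.
  intros Hx. unfold lower_primitive.
  destruct (Lub_Rbar_correct (left_sums g a x)) as [Hub Hlub].
  assert (Hbounded : is_ub_Rbar (left_sums g a x) ((x - a) * g x)).
  { intros s [l [Hc ->]]. simpl. apply left_sum_le; lra || assumption. }
  assert (Hne : left_sums g a x (left_sum g a nil x)).
  { exists nil. simpl. split; [lra | reflexivity]. }
  destruct (Lub_Rbar (left_sums g a x)) as [r | |]; simpl.
  - split; [exact Hub|]. intros M HM. apply (Hlub (Finite M)). exact HM.
  - destruct (Hlub _ Hbounded).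
  - destruct (Hub _ Hne).
Qed.

Lemma lower_primitive_subgradient : subgradient_on (lower_primitive g a) g a b.
Proof.
  intros x y Hx Hy.
  destruct (lower_primitive_lub x Hx) as [Hubx Hlubx].
  destruct (lower_primitive_lub y Hy) as [Huby Hluby].
  destruct (Rle_or_lt x y) as [Hxy | Hyx].
  - cut (lower_primitive g a y <= lower_primitive g a x + (y - x) * g y); [lra|].
    apply Hluby. intros s [l [Hc ->]].
    destruct (left_sum_split l a x y ltac:(lra) ltac:(lra) Hc ltac:(lra) Hxy)
      as [l1 [Hc1 Hsum]].
    assert (Hs1 := Hubx _ (ex_intro _ l1 (conj Hc1 eq_refl))). lra.
  - cut (lower_primitive g a y <= lower_primitive g a x - (x - y) * g y); [lra|].
    apply Hluby. intros s [l [Hc ->]].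
    destruct (left_sum_snoc g l a y x Hc ltac:(lra)) as [Hc' Hsum].
    assert (Hs' := Hubx _ (ex_intro _ _ (conj Hc' eq_refl))). lra.
Qed.

Lemma subgradient_on_RInt : subgradient_on (RInt g a) g a b.
Proof.
  assert (Hlp := lower_primitive_subgradient).
  intros x y Hx Hy.
  rewrite (RInt_subgradient _ _ a b a x Hlp), (RInt_subgradient _ _ a b a y Hlp) by lra.
  assert (Hxy := Hlp x y Hx Hy). lra.
Qed.

End Nondecreasing.

Definition truthful_utility (f2 p : R -> R -> R) (k v : R) : R := v * f2 v k - p v k.

Definition IC_conditions (f2 p : R -> R -> R) : Prop :=
  forall v k, inV v -> inK k ->
     (forall v', inV v' -> v < v' -> f2 v k <= f2 v' k) /\
     p v k = p 0 1 + v * f2 v k - RInt (fun t => f2 t k) 0 v /\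
     (forall k', inK k' -> k < k' ->
        RInt (fun t => f2 t k') 0 v <= RInt (fun t => f2 t k) 0 v) /\
     (forall k', inK k' -> k < k' ->
        RInt (fun t => f2 t k) 0 (v * k / k') <= RInt (fun t => f2 t k') 0 v).

Lemma inV_scale v k k' : inV v -> inK k -> inK k' -> k <= k' -> inV (v * k / k').
Proof.
  unfold inV, inK. intros Hv Hk Hk' Hkk. split.
  - apply Rdiv_le_0_compat; [apply Rmult_le_pos|]; lra.
  - apply (Rmult_le_reg_r k'); [lra|].
    replace (v * k / k' * k') with (v * k) by (field; lra). nra.
Qed.

Section Leontief.

Variables f1 f2 p : R -> R -> R.
Hypothesis Hmech : is_mechanism f1 f2.
Hypothesis Hrel : forall v k, inV v -> inK k -> f1 v k = k * f2 v k.

Lemma U_report_higher v k v' k' : inK k -> inV v' -> inK k' -> k <= k' ->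
  U v k (f1 v' k') (f2 v' k') (p v' k') = v * f2 v' k' - p v' k'.
Proof.
  intros Hk Hv' Hk' Hkk. unfold U. rewrite Hrel by assumption.
  destruct (Hmech v' k' Hv' Hk') as [_ HF]. unfold inK in *.
  rewrite Rmin_right; [reflexivity|].
  apply (Rmult_le_reg_r k); [lra|].
  replace (k' * f2 v' k' / k * k) with (k' * f2 v' k') by (field; lra). nra.
Qed.

Lemma U_report_lower v k v' k' : inK k -> inV v' -> inK k' -> k' <= k ->
  U v k (f1 v' k') (f2 v' k') (p v' k') = v * k' / k * f2 v' k' - p v' k'.
Proof.
  intros Hk Hv' Hk' Hkk. unfold U. rewrite Hrel by assumption.
  destruct (Hmech v' k' Hv' Hk') as [_ HF]. unfold inK in *.
  rewrite Rmin_left.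
  - unfold Rdiv. ring.
  - apply (Rmult_le_reg_r k); [lra|].
    replace (k' * f2 v' k' / k * k) with (k' * f2 v' k') by (field; lra). nra.
Qed.

Lemma U_truthful v k : inV v -> inK k ->
  U v k (f1 v k) (f2 v k) (p v k) = truthful_utility f2 p k v.
Proof. intros Hv Hk. apply U_report_higher; auto using Rle_refl. Qed.

Section IncentiveCompatible.

Hypothesis IC : incentive_compatible f1 f2 p.

Lemma IC_price_zero k : inK k -> p 0 k = p 0 1.
Proof.
  intros Hk.
  assert (H0 : inV 0) by (unfold inV; lra).
  assert (H1 : inK 1) by (unfold inK; lra).
  assert (Hk1 := IC 0 k 0 1 H0 Hk H0 H1).
  assert (H1k := IC 0 1 0 k H0 H1 H0 Hk).
  unfold U in *. rewrite !Rmult_0_l in *. lra.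
Qed.

Lemma IC_subgradient k : inK k ->
  subgradient_on (truthful_utility f2 p k) (fun t => f2 t k) 0 1.
Proof.
  intros Hk x y Hx Hy.
  assert (Hdev := IC x k y k Hx Hk Hy Hk).
  rewrite U_report_higher, U_truthful in Hdev by (auto using Rle_refl).
  unfold truthful_utility in *. lra.
Qed.

Lemma IC_RInt v k : inV v -> inK k ->
  RInt (fun t => f2 t k) 0 v = truthful_utility f2 p k v + p 0 1.
Proof.
  intros Hv Hk. unfold inV in Hv.
  rewrite (RInt_subgradient _ _ 0 1 0 v (IC_subgradient k Hk)) by lra.
  unfold truthful_utility. rewrite (IC_price_zero k Hk). lra.
Qed.

Lemma IC_implies_conditions : IC_conditions f2 p.
Proof.
  intros v k Hv Hk. split; [|split; [|split]].
  - intros v' Hv' Hlt. unfold inV in *.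
    apply (subgradient_on_nondecreasing _ _ 0 1 (IC_subgradient k Hk)); lra.
  - rewrite IC_RInt by assumption. unfold truthful_utility. ring.
  - intros k' Hk' Hlt. rewrite !IC_RInt by assumption.
    assert (Hdev := IC v k v k' Hv Hk Hv Hk').
    rewrite U_report_higher, U_truthful in Hdev by (auto; lra).
    unfold truthful_utility in *. lra.
  - intros k' Hk' Hlt.
    assert (Hw := inV_scale v k k' Hv Hk Hk' ltac:(lra)).
    rewrite !IC_RInt by assumption.
    assert (Hdev := IC v k' (v * k / k') k Hv Hk' Hw Hk).
    rewrite U_report_lower, U_truthful in Hdev by (auto; lra).
    unfold truthful_utility in *. lra.
Qed.

End IncentiveCompatible.

Section Conditions.

Hypothesis Hcond : IC_conditions f2 p.

Lemma conditions_nondecreasing k : inK k -> nondecreasing_on (fun t => f2 t k) 0 1.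
Proof.
  intros Hk x y Hx Hxy Hy.
  destruct (Rle_lt_or_eq_dec x y Hxy) as [Hlt | <-]; [|apply Rle_refl].
  apply (proj1 (Hcond x k ltac:(unfold inV; lra) Hk)); [unfold inV|]; lra.
Qed.

Lemma conditions_implies_IC : incentive_compatible f1 f2 p.
Proof.
  intros v k v' k' Hv Hk Hv' Hk'.
  assert (Hsub := subgradient_on_RInt _ _ _ (conditions_nondecreasing k' Hk')).
  destruct (Hcond v k Hv Hk) as [_ [Hpv [Hmono_k _]]].
  destruct (Hcond v' k' Hv' Hk') as [_ [Hpv' _]].
  rewrite U_truthful by assumption. unfold truthful_utility.
  destruct (Rle_or_lt k k') as [Hkk | Hkk].
  - rewrite U_report_higher, Hpv, Hpv' by assumption.
    assert (Hline := Hsub v v' Hv Hv').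
    assert (Hk_k' : RInt (fun t => f2 t k') 0 v <= RInt (fun t => f2 t k) 0 v).
    { destruct (Rle_lt_or_eq_dec k k' Hkk) as [Hlt | <-]; [|lra].
      exact (Hmono_k k' Hk' Hlt). }
    lra.
  - rewrite U_report_lower, Hpv, Hpv' by (assumption || lra).
    assert (Hw := inV_scale v k' k Hv Hk' Hk ltac:(lra)).
    assert (Hline := Hsub (v * k' / k) v' Hw Hv').
    destruct (Hcond v k' Hv Hk') as [_ [_ [_ Hscaled]]].
    assert (Hk'_k := Hscaled k Hk Hkk).
    lra.
Qed.

End Conditions.

End Leontief.

Theorem proposition3 (f1 f2 p : R -> R -> R)
  (Hmech : is_mechanism f1 f2)
  (Hrel : forall v k, inV v -> inK k -> f1 v k = k * f2 v k) :
  incentive_compatible f1 f2 p <->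
  (forall v k, inV v -> inK k ->
     (forall v', inV v' -> v < v' -> f2 v k <= f2 v' k) /\
     p v k = p 0 1 + v * f2 v k - RInt (fun t => f2 t k) 0 v /\
     (forall k', inK k' -> k < k' ->
        RInt (fun t => f2 t k') 0 v <= RInt (fun t => f2 t k) 0 v) /\
     (forall k', inK k' -> k < k' ->
        RInt (fun t => f2 t k) 0 (v * k / k') <= RInt (fun t => f2 t k') 0 v)).
Proof.
  split; [apply IC_implies_conditions | apply conditions_implies_IC]; assumption.
Qed.
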